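(* Let $\mathbf{s}=\{1/n : n\in\mathbb{N}\}\cup\{0\}\subset\mathbb{R}$. Then the free locally convex space $L(\mathbf{s})$ is topologically isomorphic (as a locally convex space) to the Graev free locally convex space $L_G(\mathbf{s})$; more precisely, with $\mathbf{s}^\ast=\mathbf{s}\setminus\{1\}$, one has $L_G(\mathbf{s})\cong L_G(\{1\})\oplus L_G(\mathbf{s}^\ast)\cong\mathbb{R}\oplus L_G(\mathbf{s})\cong L(\mathbf{s})$.
   Context: All vector spaces are real. For a Tychonoff space $X$, the free locally convex space $L(X)$ is a locally convex space with a continuous map $i:X\to L(X)$ such that every continuous map $f$ from $X$ into a locally convex space $E$ extends uniquely to a continuous linear $\bar f:L(X)\to E$ with $f=\bar f\circ i$. For a Tychonoff space $X$ with distinguished point $e$, the Graev free locally convex space $L_G(X)$ is a locally convex space with a continuous map $i:X\to L_G(X)$, $i(e)=0$, such that every continuous map $f$ from $X$ into a locally convex space $E$ with $f(e)=0$ extends uniquely to a continuous linear $\bar f:L_G(X)\to E$ with $f=\bar f\circ i$; it is independent of the choice of $e$ up to isomorphism, and algebraically it is the free vector space on $X\setminus\{e\}$. It is known that $L(X)\cong\mathbb{R}\oplus L_G(X)$ for every Tychonoff $X$, and that $L_G$ of a topological disjoint union of two spaces is the direct sum of the $L_G$'s. *)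

From Stdlib Require Import Reals Lra.
Open Scope R_scope.

Record topology (T : Type) := Topology {
  is_open : (T -> Prop) -> Prop;
  open_all : is_open (fun _ => True);
  open_inter : forall U V, is_open U -> is_open V -> is_open (fun x => U x /\ V x);
  open_union : forall (F : (T -> Prop) -> Prop),
      (forall U, F U -> is_open U) -> is_open (fun x => exists U, F U /\ U x)
}.
Arguments is_open {T} t U.

Definition continuous {X Y : Type} (tX : topology X) (tY : topology Y)
  (f : X -> Y) : Prop :=
  forall V, is_open tY V -> is_open tX (fun x => V (f x)).

Record LCS := MkLCS {
  lc_car :> Type;
  lc_zero : lc_car;
  lc_add : lc_car -> lc_car -> lc_car;
  lc_opp : lc_car -> lc_car;
  lc_scal : R -> lc_car -> lc_car;
  lc_addA : forall x y z, lc_add x (lc_add y z) = lc_add (lc_add x y) z;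
  lc_addC : forall x y, lc_add x y = lc_add y x;
  lc_add0 : forall x, lc_add x lc_zero = x;
  lc_addN : forall x, lc_add x (lc_opp x) = lc_zero;
  lc_scalA : forall a b x, lc_scal a (lc_scal b x) = lc_scal (a * b) x;
  lc_scal1 : forall x, lc_scal 1 x = x;
  lc_scalDr : forall a x y, lc_scal a (lc_add x y) = lc_add (lc_scal a x) (lc_scal a y);
  lc_scalDl : forall a b x, lc_scal (a + b) x = lc_add (lc_scal a x) (lc_scal b x);
  lc_top : topology lc_car;
  lc_add_cont : forall x y U, is_open lc_top U -> U (lc_add x y) ->
      exists V W, is_open lc_top V /\ V x /\ is_open lc_top W /\ W y /\
        forall u v, V u -> W v -> U (lc_add u v);
  lc_scal_cont : forall a x U, is_open lc_top U -> U (lc_scal a x) ->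
      exists eps, 0 < eps /\ exists V, is_open lc_top V /\ V x /\
        forall b z, Rabs (b - a) < eps -> V z -> U (lc_scal b z);
  lc_loc_convex : forall U, is_open lc_top U -> U lc_zero ->
      exists V, is_open lc_top V /\ V lc_zero /\
        (forall x y t, V x -> V y -> 0 <= t <= 1 ->
           V (lc_add (lc_scal t x) (lc_scal (1 - t) y))) /\
        (forall z, V z -> U z)
}.

Definition lc_linear {E F : LCS} (g : E -> F) : Prop :=
  (forall x y, g (lc_add E x y) = lc_add F (g x) (g y)) /\
  (forall a x, g (lc_scal E a x) = lc_scal F a (g x)).

Definition lcs_iso (E F : LCS) : Prop :=
  exists (T : E -> F) (S : F -> E),
    lc_linear T /\ continuous (lc_top E) (lc_top F) T /\
    lc_linear S /\ continuous (lc_top F) (lc_top E) S /\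
    (forall x, S (T x) = x) /\ (forall y, T (S y) = y).

Definition is_free_lcs {X : Type} (tX : topology X) (E : LCS) (i : X -> E) : Prop :=
  continuous tX (lc_top E) i /\
  forall (F : LCS) (f : X -> F), continuous tX (lc_top F) f ->
    exists g : E -> F,
      lc_linear g /\ continuous (lc_top E) (lc_top F) g /\
      (forall x, g (i x) = f x) /\
      (forall h : E -> F, lc_linear h -> continuous (lc_top E) (lc_top F) h ->
         (forall x, h (i x) = f x) -> forall v, h v = g v).

Definition is_graev_free_lcs {X : Type} (tX : topology X) (e : X)
  (E : LCS) (i : X -> E) : Prop :=
  continuous tX (lc_top E) i /\ i e = lc_zero E /\
  forall (F : LCS) (f : X -> F), continuous tX (lc_top F) f -> f e = lc_zero F ->
    exists g : E -> F,
      lc_linear g /\ continuous (lc_top E) (lc_top F) g /\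
      (forall x, g (i x) = f x) /\
      (forall h : E -> F, lc_linear h -> continuous (lc_top E) (lc_top F) h ->
         (forall x, h (i x) = f x) -> forall v, h v = g v).

Definition in_s (x : R) : Prop := x = 0 \/ exists n : nat, x = / INR (S n).

Definition s_space : Type := { x : R | in_s x }.

Definition s_open (U : s_space -> Prop) : Prop :=
  forall x, U x -> exists eps, 0 < eps /\
    forall y : s_space, Rabs (proj1_sig y - proj1_sig x) < eps -> U y.

Lemma s_open_all : s_open (fun _ => True).
Proof. intros x _. exists 1. split; [lra | auto]. Qed.

Lemma s_open_inter : forall U V, s_open U -> s_open V -> s_open (fun x => U x /\ V x).
Proof.
  intros U V HU HV x [Ux Vx].
  destruct (HU x Ux) as [e1 [He1 H1]]. destruct (HV x Vx) as [e2 [He2 H2]].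
  exists (Rmin e1 e2). split.
  - apply Rmin_pos; assumption.
  - intros y Hy. split.
    + apply H1. eapply Rlt_le_trans; [exact Hy | apply Rmin_l].
    + apply H2. eapply Rlt_le_trans; [exact Hy | apply Rmin_r].
Qed.

Lemma s_open_union : forall (F : (s_space -> Prop) -> Prop),
  (forall U, F U -> s_open U) -> s_open (fun x => exists U, F U /\ U x).
Proof.
  intros F HF x [U [FU Ux]].
  destruct (HF U FU x Ux) as [e [He H]].
  exists e. split; [exact He|]. intros y Hy. exists U. split; auto.
Qed.

Definition s_top : topology s_space :=
  Topology s_space s_open s_open_all s_open_inter s_open_union.

(* The shift [σ x = x / (1 + x)] maps [1/n] to [1/(n+1)], hence is a
   homeomorphism of [s] onto [s* = s ∖ {1}]; since [1] is isolated in [s], the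
   inverse [σ⁻¹] extends continuously to [s] by sending [1] to [0].
   Translating by [i 1] resp. [i e], the universal properties give continuous
   linear maps [T : L(s) → L_G(s)] with [T (i x) = i (σ x) - i 1] and
   [S : L_G(s) → L(s)] with [S (i y) = i (σ⁻¹ y) - i (σ⁻¹ e)].  Both composites
   fix the generators, so by uniqueness of extensions they are identities. *)
From Stdlib Require Import Reals Lra Lia Classical FunctionalExtensionality PropExtensionality.
Open Scope R_scope.

Section LCSAlgebra.
Variable E : LCS.
Notation add := (lc_add E).
Notation scal := (lc_scal E).
Notation zero := (lc_zero E).

Lemma lc_add0l x : add zero x = x.
Proof. rewrite lc_addC; apply lc_add0. Qed.

Lemma lc_addIr x y w : add x y = add x w -> y = w.
Proof.
  intro H.
  rewrite <- (lc_add0l y), <- (lc_add0l w), <- (lc_addN E x),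
    (lc_addC E x (lc_opp E x)), <- !lc_addA, H.
  reflexivity.
Qed.

Lemma lc_scal0 x : scal 0 x = zero.
Proof.
  apply (lc_addIr (scal 0 x)).
  rewrite lc_add0, <- lc_scalDl, Rplus_0_r. reflexivity.
Qed.

Definition lc_sub x y := add x (scal (-1) y).

Lemma lc_subrr x : lc_sub x x = zero.
Proof.
  unfold lc_sub. rewrite <- (lc_scal1 E x) at 1. rewrite <- lc_scalDl.
  replace (1 + -1) with 0 by ring. apply lc_scal0.
Qed.

Lemma lc_subr0 x : lc_sub x zero = x.
Proof.
  unfold lc_sub. rewrite <- (lc_scal0 zero), lc_scalA, Rmult_0_r, lc_scal0.
  apply lc_add0.
Qed.

Lemma lc_subBB a b c : lc_sub (lc_sub a c) (lc_sub b c) = lc_sub a b.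
Proof.
  unfold lc_sub.
  rewrite lc_scalDr, lc_scalA. replace (-1 * -1) with 1 by ring.
  rewrite (lc_addC E (scal (-1) b)), lc_addA, <- (lc_addA E a), <- lc_scalDl.
  replace (-1 + 1) with 0 by ring.
  rewrite lc_scal0, lc_add0. reflexivity.
Qed.
End LCSAlgebra.
Arguments lc_sub {E}.

Lemma lc_linear0 {E F : LCS} (g : E -> F) : lc_linear g -> g (lc_zero E) = lc_zero F.
Proof. intros [_ Hs]. rewrite <- (lc_scal0 E (lc_zero E)), Hs. apply lc_scal0. Qed.

Lemma lc_linear_sub {E F : LCS} (g : E -> F) x y :
  lc_linear g -> g (lc_sub x y) = lc_sub (g x) (g y).
Proof. intros [Ha Hs]. unfold lc_sub. rewrite Ha, Hs. reflexivity. Qed.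

Lemma lc_linear_comp {E F G : LCS} (g : E -> F) (h : F -> G) :
  lc_linear g -> lc_linear h -> lc_linear (fun v => h (g v)).
Proof. intros [Ga Gs] [Ha Hs]. split; intros; rewrite ?Ga, ?Gs, ?Ha, ?Hs; reflexivity. Qed.

Lemma lc_linear_id (E : LCS) : lc_linear (fun v : E => v).
Proof. split; reflexivity. Qed.

Lemma open_of_nbhd {T} (t : topology T) (A : T -> Prop) :
  (forall x, A x -> exists V, is_open t V /\ V x /\ forall y, V y -> A y) -> is_open t A.
Proof.
  intro H.
  replace A with (fun x => exists U, (is_open t U /\ forall y, U y -> A y) /\ U x).
  - apply open_union. intros U [HU _]; exact HU.
  - apply functional_extensionality; intro x; apply propositional_extensionality; split.
    + intros [U [[_ HU] Ux]]. auto.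
    + intro Ax. destruct (H x Ax) as [V [HV [Vx HVA]]]. exists V; auto.
Qed.

Lemma continuous_comp {X Y Z} (tX : topology X) (tY : topology Y) (tZ : topology Z) f g :
  continuous tX tY f -> continuous tY tZ g -> continuous tX tZ (fun x => g (f x)).
Proof. intros Hf Hg V HV. exact (Hf _ (Hg _ HV)). Qed.

Lemma continuous_id {X} (tX : topology X) : continuous tX tX (fun x => x).
Proof. intros V HV. exact HV. Qed.

Lemma continuous_const {X} (tX : topology X) (F : LCS) (c : F) :
  continuous tX (lc_top F) (fun _ => c).
Proof.
  intros U HU. apply open_of_nbhd. intros x Ux.
  exists (fun _ => True). split; [apply open_all | auto].
Qed.

Lemma continuous_add {X} (tX : topology X) (F : LCS) f g :
  continuous tX (lc_top F) f -> continuous tX (lc_top F) g ->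
  continuous tX (lc_top F) (fun x => lc_add F (f x) (g x)).
Proof.
  intros Hf Hg U HU. apply open_of_nbhd. intros x Ux.
  destruct (lc_add_cont F _ _ _ HU Ux) as [V [W [HV [Vx [HW [Wx HVW]]]]]].
  exists (fun y => V (f y) /\ W (g y)). split.
  - apply open_inter; [apply Hf | apply Hg]; assumption.
  - split; [auto|]. intros y [? ?]; auto.
Qed.

Lemma continuous_scal {X} (tX : topology X) (F : LCS) a f :
  continuous tX (lc_top F) f -> continuous tX (lc_top F) (fun x => lc_scal F a (f x)).
Proof.
  intros Hf U HU. apply open_of_nbhd. intros x Ux.
  destruct (lc_scal_cont F _ _ _ HU Ux) as [eps [Heps [V [HV [Vx HVU]]]]].
  exists (fun y => V (f y)). split; [apply Hf; assumption|]. split; [auto|].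
  intros y Vy. apply HVU; [|assumption]. rewrite Rminus_diag, Rabs_R0. exact Heps.
Qed.

Lemma continuous_sub {X} (tX : topology X) (F : LCS) f g :
  continuous tX (lc_top F) f -> continuous tX (lc_top F) g ->
  continuous tX (lc_top F) (fun x => lc_sub (f x) (g x)).
Proof. intros. apply continuous_add; [|apply continuous_scal]; assumption. Qed.

Lemma free_lcs_endo_id {X} (tX : topology X) (E : LCS) (i : X -> E) (h : E -> E) :
  is_free_lcs tX E i -> lc_linear h -> continuous (lc_top E) (lc_top E) h ->
  (forall x, h (i x) = i x) -> forall v, h v = v.
Proof.
  intros [Hi U] hL hC hi v.
  destruct (U E i Hi) as [g [_ [_ [_ Ug]]]].
  rewrite (Ug h hL hC hi). symmetry.
  exact (Ug _ (lc_linear_id E) (continuous_id _) (fun _ => eq_refl) v).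
Qed.

Lemma graev_free_lcs_endo_id {X} (tX : topology X) (e : X) (E : LCS) (i : X -> E)
  (h : E -> E) :
  is_graev_free_lcs tX e E i -> lc_linear h -> continuous (lc_top E) (lc_top E) h ->
  (forall x, h (i x) = i x) -> forall v, h v = v.
Proof.
  intros [Hi [He U]] hL hC hi v.
  destruct (U E i Hi He) as [g [_ [_ [_ Ug]]]].
  rewrite (Ug h hL hC hi). symmetry.
  exact (Ug _ (lc_linear_id E) (continuous_id _) (fun _ => eq_refl) v).
Qed.

(* The Möbius maps [x ↦ x / (1 + c x)] form a one-parameter group; [c = 1]
   shifts [1/n] to [1/(n+1)] and [c = -1] shifts back. *)
Definition moebius (c x : R) : R := x / (1 + c * x).

Lemma moebius_comp c d x : 1 + d * x <> 0 -> 1 + (c + d) * x <> 0 ->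
  moebius c (moebius d x) = moebius (c + d) x.
Proof. intros. unfold moebius. field. split; [|assumption]. lra. Qed.

Lemma moebius0 x : moebius 0 x = x.
Proof. unfold moebius. field. Qed.

Lemma moebius_dist c a b k : 0 < k -> k <= (1 + c * b) * (1 + c * a) ->
  k * Rabs (moebius c b - moebius c a) <= Rabs (b - a).
Proof.
  intros Hk Hka.
  assert (Hb : 1 + c * b <> 0) by (intro Z; rewrite Z in Hka; lra).
  assert (Ha : 1 + c * a <> 0) by (intro Z; rewrite Z in Hka; lra).
  replace (b - a) with ((moebius c b - moebius c a) * ((1 + c * b) * (1 + c * a)))
    by (unfold moebius; field; auto).
  rewrite Rabs_mult, (Rabs_pos_eq ((1 + c * b) * (1 + c * a))) by lra.
  rewrite Rmult_comm. apply Rmult_le_compat_l; [apply Rabs_pos | exact Hka].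
Qed.

Lemma s_val_inj (a b : s_space) : proj1_sig a = proj1_sig b -> a = b.
Proof. destruct a as [a pa], b as [b pb]; simpl; intros ->. f_equal; apply proof_irrelevance. Qed.

Lemma in_s_ge0 x : in_s x -> 0 <= x.
Proof. intros [->|[n ->]]; [lra|]. left; apply Rinv_0_lt_compat, lt_0_INR; lia. Qed.

Lemma in_s_le_half x : in_s x -> x <> 1 -> x <= 1/2.
Proof.
  intros [->|[[|m] ->]] H; [lra| |].
  - exfalso; apply H; simpl; apply Rinv_1.
  - replace (1/2) with (/2) by field. apply Rinv_le_contravar; [lra|].
    rewrite !S_INR. pose proof (pos_INR m). lra.
Qed.

Lemma in_s_moebius1 x : in_s x -> in_s (moebius 1 x).
Proof.
  unfold moebius. intros [->|[n ->]].
  - left. field.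
  - right. exists (S n). assert (0 < INR (S n)) by (apply lt_0_INR; lia).
    rewrite (S_INR (S n)). field. lra.
Qed.

Lemma in_s_moebiusN1 x : in_s x -> x <> 1 -> in_s (moebius (-1) x).
Proof.
  unfold moebius. intros [->|[[|m] ->]] H.
  - left. field.
  - exfalso; apply H; simpl; apply Rinv_1.
  - right. exists m. assert (0 < INR (S m)) by (apply lt_0_INR; lia).
    rewrite (S_INR (S m)). field. lra.
Qed.

Definition s_one : s_space := exist _ 1 (or_intror (ex_intro _ O (eq_sym Rinv_1))).

Definition s_shift (x : s_space) : s_space :=
  exist _ (moebius 1 (proj1_sig x)) (in_s_moebius1 _ (proj2_sig x)).

(* The value [0] at [1] is arbitrary: [s_unshift] only matters on [s ∖ {1}]. *)
Definition unshift_val (x : R) : R := if Req_dec_T x 1 then 0 else moebius (-1) x.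

Lemma in_s_unshift_val x : in_s x -> in_s (unshift_val x).
Proof.
  unfold unshift_val. destruct (Req_dec_T x 1) as [_|N].
  - intros _. left. reflexivity.
  - intro Hx. exact (in_s_moebiusN1 x Hx N).
Qed.

Definition s_unshift (y : s_space) : s_space :=
  exist _ (unshift_val (proj1_sig y)) (in_s_unshift_val _ (proj2_sig y)).

Lemma s_shift_ne1 x : proj1_sig (s_shift x) <> 1.
Proof.
  simpl. pose proof (in_s_ge0 _ (proj2_sig x)). unfold moebius. intro H1.
  assert (proj1_sig x / (1 + 1 * proj1_sig x) * (1 + 1 * proj1_sig x) = proj1_sig x)
    by (field; lra).
  rewrite H1 in H0. lra.
Qed.

Lemma s_unshift_shift x : s_unshift (s_shift x) = x.
Proof.
  apply s_val_inj. simpl. unfold unshift_val.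
  destruct (Req_dec_T _ 1) as [C|_]; [exfalso; exact (s_shift_ne1 x C)|].
  pose proof (in_s_ge0 _ (proj2_sig x)).
  rewrite moebius_comp by lra. replace (-1 + 1) with 0 by ring. apply moebius0.
Qed.

Lemma s_shift_unshift y : proj1_sig y <> 1 -> s_shift (s_unshift y) = y.
Proof.
  intro N. apply s_val_inj. simpl. unfold unshift_val.
  destruct (Req_dec_T _ 1) as [C|_]; [contradiction|].
  rewrite moebius_comp by lra. replace (1 + -1) with 0 by ring. apply moebius0.
Qed.

Lemma s_shift_continuous : continuous s_top s_top s_shift.
Proof.
  intros V HV x Vx. destruct (HV _ Vx) as [eps [Heps H]].
  exists eps. split; [exact Heps|]. intros y Hy. apply H. simpl.
  pose proof (in_s_ge0 _ (proj2_sig x)). pose proof (in_s_ge0 _ (proj2_sig y)).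
  pose proof (moebius_dist 1 (proj1_sig x) (proj1_sig y) 1 Rlt_0_1 ltac:(nra)).
  lra.
Qed.

(* Points of [s] within [1/4] of a point [x ≠ 1] stay below [3/4], where
   [σ⁻¹] is [16]-Lipschitz. *)
Lemma s_unshift_near x eps : proj1_sig x <> 1 -> 0 < eps ->
  exists delta, 0 < delta /\ forall y : s_space,
    Rabs (proj1_sig y - proj1_sig x) < delta ->
    proj1_sig y <> 1 /\ Rabs (proj1_sig (s_unshift y) - proj1_sig (s_unshift x)) < eps.
Proof.
  intros Nx Heps. exists (Rmin (1/4) (eps/16)). split; [apply Rmin_pos; lra|].
  intros y Hy. pose proof (Rmin_l (1/4) (eps/16)). pose proof (Rmin_r (1/4) (eps/16)).
  pose proof (in_s_le_half _ (proj2_sig x) Nx). pose proof (in_s_ge0 _ (proj2_sig x)).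
  pose proof (Rle_abs (proj1_sig y - proj1_sig x)).
  assert (Ny : proj1_sig y <> 1) by lra.
  split; [exact Ny|]. simpl. unfold unshift_val.
  destruct (Req_dec_T (proj1_sig y) 1); [contradiction|].
  destruct (Req_dec_T (proj1_sig x) 1); [contradiction|].
  pose proof (moebius_dist (-1) (proj1_sig x) (proj1_sig y) (1/16) ltac:(lra) ltac:(nra)).
  lra.
Qed.

Definition unshift_or_zero (E : LCS) (i : s_space -> E) (y : s_space) : E :=
  if Req_dec_T (proj1_sig y) 1 then lc_zero E else i (s_unshift y).

Lemma unshift_or_zero_one (E : LCS) (i : s_space -> E) :
  unshift_or_zero E i s_one = lc_zero E.
Proof. unfold unshift_or_zero. destruct (Req_dec_T _ 1) as [_|N]; [reflexivity|]. now elim N. Qed.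

Lemma unshift_or_zero_shift (E : LCS) (i : s_space -> E) x :
  unshift_or_zero E i (s_shift x) = i x.
Proof.
  unfold unshift_or_zero. destruct (Req_dec_T _ 1) as [C|_].
  - exfalso; exact (s_shift_ne1 x C).
  - rewrite s_unshift_shift. reflexivity.
Qed.

Lemma unshift_or_zero_continuous (E : LCS) (i : s_space -> E) :
  continuous s_top (lc_top E) i -> continuous s_top (lc_top E) (unshift_or_zero E i).
Proof.
  intros Hi V HV x Vx. unfold unshift_or_zero in *.
  destruct (Req_dec_T (proj1_sig x) 1) as [Ex|Nx].
  - (* [1] is isolated in [s] *)
    exists (1/2). split; [lra|]. intros y Hy.
    destruct (Req_dec_T (proj1_sig y) 1) as [_|Ny]; [exact Vx|].
    pose proof (in_s_le_half _ (proj2_sig y) Ny). rewrite Ex in Hy.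
    pose proof (Rle_abs (-(proj1_sig y - 1))). rewrite Rabs_Ropp in *. lra.
  - destruct (Hi V HV _ Vx) as [eps [Heps H]].
    destruct (s_unshift_near x eps Nx Heps) as [delta [Hdelta Hnear]].
    exists delta. split; [exact Hdelta|]. intros y Hy.
    destruct (Hnear y Hy) as [Ny Hd].
    destruct (Req_dec_T (proj1_sig y) 1); [contradiction|]. exact (H _ Hd).
Qed.

Theorem mainTheorem2 :
  forall (E1 : LCS) (i1 : s_space -> E1), is_free_lcs s_top E1 i1 ->
  forall (e : s_space) (E2 : LCS) (i2 : s_space -> E2),
    is_graev_free_lcs s_top e E2 i2 ->
  lcs_iso E1 E2.
Proof.
  intros E1 i1 Hfree e E2 i2 Hgraev.
  pose proof Hfree as [Hi1 U1]. pose proof Hgraev as [Hi2 [Hi2e U2]].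
  set (rho := unshift_or_zero E1 i1).
  set (f := fun x => lc_sub (i2 (s_shift x)) (i2 s_one)).
  set (h := fun y => lc_sub (rho y) (rho e)).
  destruct (U1 E2 f) as [T [TL [TC [Tf _]]]].
  { apply continuous_sub; [apply (continuous_comp _ _ _ _ _ s_shift_continuous Hi2) |
                           apply continuous_const]. }
  destruct (U2 E1 h) as [S [SL [SC [Sh _]]]].
  { apply continuous_sub; [apply unshift_or_zero_continuous, Hi1 | apply continuous_const]. }
  { apply lc_subrr. }
  assert (Trho : forall y, T (rho y) = lc_sub (i2 y) (i2 s_one)).
  { intro y. unfold rho, unshift_or_zero.
    destruct (Req_dec_T (proj1_sig y) 1) as [C|C].
    - rewrite (lc_linear0 T TL), (s_val_inj y s_one C). symmetry; apply lc_subrr.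
    - rewrite Tf. unfold f. rewrite s_shift_unshift by exact C. reflexivity. }
  exists T, S. do 4 (split; [assumption|]). split.
  - apply (free_lcs_endo_id _ _ _ _ Hfree (lc_linear_comp T S TL SL)
             (continuous_comp _ _ _ _ _ TC SC)).
    intro x. rewrite Tf. unfold f. rewrite (lc_linear_sub S _ _ SL), !Sh. unfold h. rewrite lc_subBB.
    unfold rho. rewrite unshift_or_zero_shift, unshift_or_zero_one. apply lc_subr0.
  - apply (graev_free_lcs_endo_id _ _ _ _ _ Hgraev (lc_linear_comp S T SL TL)
             (continuous_comp _ _ _ _ _ SC TC)).
    intro y. rewrite Sh. unfold h.
    rewrite (lc_linear_sub T _ _ TL), !Trho, lc_subBB, Hi2e. apply lc_subr0.
Qed.
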